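(* Let $(r(k))_{k\ge 0}$ be arbitrary elements of a commutative ring, and define numbers $b(n,k)$ for integers $n\ge 0$, $k\ge -1$ by $b(0,k)=[k=0]$, $b(n,-1)=0$, and for $n>0$, $k\ge 0$, $$b(n,k)=b(n-1,k-1)+r(k)\,b(n-1,k+1).$$ Then for all integers $n,\ell\ge 0$, $$\sum_{k=0}^{\min(n,\ell)} b(2n,2k)\,b(2\ell,2k)\prod_{j=0}^{2k-1} r(j)=b(2n+2\ell,0).$$
   Context: $[P]$ denotes the Iverson bracket (1 if $P$ is true, 0 otherwise). An empty product equals $1$. *)

From mathcomp Require Import all_boot all_algebra.
Set Implicit Arguments. Unset Strict Implicit. Unset Printing Implicit Defensive.
Import GRing.Theory.
Local Open Scope ring_scope.

(* b r n k for k >= 0; the value b(n,-1) = 0 is built in: the term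
   b(n-1,k-1) is read as 0 when k = 0. *)
Fixpoint bnum (R : comRingType) (r : nat -> R) (n k : nat) : R :=
  match n with
  | 0%N => (k == 0%N)%:R
  | n'.+1 => (match k with 0%N => 0 | k'.+1 => bnum r n' k' end)
             + r k * bnum r n' k.+1
  end.

(* The numbers b(n, k) are the matrix entries of the tridiagonal operator
   x e_k = e_(k+1) + r(k-1) e_(k-1), acting on the basis (e_k), applied n times
   to e_0.  That operator is self-adjoint for the diagonal bilinear form
   <e_j, e_k> = [j = k] r(0)...r(k-1), so <x^m e_0, x^p e_0> = <x^(m+p) e_0, e_0>
   = b(m+p, 0).  For m = 2n and p = 2l only even indices k <= 2 min(n, l)
   contribute to the left-hand side, which is then the sum of the theorem. *)
From mathcomp Require Import all_boot all_algebra.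
From mathcomp Require Import zify ring.
Import GRing.Theory.
Local Open Scope ring_scope.

Lemma sum_nat_mul2 (V : nmodType) (F : nat -> V) (m : nat) :
  \sum_(0 <= k < 2 * m) F k = \sum_(0 <= k < m) (F (2 * k)%N + F (2 * k).+1).
Proof.
elim: m => [|m IHm]; first by rewrite !big_geq.
by rewrite mulnS add2n !big_nat_recr //= IHm addrA.
Qed.

Section WeightedForm.
Variables (R : comRingType) (r : nat -> R).

Definition weight k := \prod_(0 <= j < k) r j.

Lemma weightS k : weight k.+1 = weight k * r k.
Proof. by rewrite /weight big_nat_recr. Qed.

Lemma bnum_gt_eq0 m k : (m < k)%N -> bnum r m k = 0.
Proof.
elim: m k => [|m IHm] [|k] //= ltmk.
by rewrite !IHm ?mulr0 ?addr0 //; lia.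
Qed.

Lemma bnum_odd_eq0 m k : odd (m + k) -> bnum r m k = 0.
Proof.
elim: m k => [|m IHm] [|k] //=; rewrite ?addn0 ?addSn => odd_mk.
  by rewrite IHm ?mulr0 ?addr0 // addn1.
have {}odd_mk : odd (m + k) by move: odd_mk; rewrite addnS /= negbK.
by rewrite !IHm ?mulr0 ?addr0 // !addnS /= negbK.
Qed.

(* The form <x^m e_0, x^p e_0>, truncated to the first N coordinates. *)
Definition bform N m p := \sum_(0 <= k < N) bnum r m k * bnum r p k * weight k.

Lemma bformC N m p : bform N m p = bform N p m.
Proof. by apply: eq_bigr => k _; rewrite (mulrC (bnum r m k)). Qed.

Lemma bform_trunc N m p : (minn m p < N)%N -> bform N m p = bform (minn m p).+1 m p.
Proof.
move=> lt_min_N; rewrite /bform (big_cat_nat _ (n := (minn m p).+1)) //=.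
rewrite [X in _ + X]big1_seq ?addr0 // => k /andP[_].
rewrite mem_index_iota gtn_min => /andP[/orP[ltmk | ltpk] _].
  by rewrite bnum_gt_eq0 ?mul0r.
by rewrite [bnum r p k]bnum_gt_eq0 ?mulr0 ?mul0r.
Qed.

Definition bform_half N m p :=
  \sum_(0 <= k < N) bnum r m k * r k * bnum r p k.+1 * weight k.

Lemma bformS N m p : (m < N)%N ->
  bform N.+1 m.+1 p = bform_half N.+1 m p + bform_half N.+1 p m.
Proof.
move=> ltmN.
have up : \sum_(0 <= k < N) bnum r m k * bnum r p k.+1 * weight k.+1
          = bform_half N.+1 m p.
  rewrite /bform_half big_nat_recr //= [bnum r m N]bnum_gt_eq0 // !mul0r addr0.
  by apply: eq_bigr => k _; rewrite weightS; ring.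
have down : r 0 * bnum r m 1 * bnum r p 0 * weight 0 +
    \sum_(0 <= k < N) r k.+1 * bnum r m k.+2 * bnum r p k.+1 * weight k.+1
    = bform_half N.+1 p m.
  rewrite /bform_half big_nat_recl //=; congr (_ + _); first by ring.
  by apply: eq_bigr => k _; rewrite weightS; ring.
rewrite /bform big_nat_recl //= add0r.
under eq_bigr => k _ do rewrite /= !mulrDl.
by rewrite big_split /= -up -down addrCA addrA.
Qed.

Lemma bform_shift N m p : (m < N)%N -> (p < N)%N ->
  bform N.+1 m.+1 p = bform N.+1 m p.+1.
Proof. by move=> ltmN ltpN; rewrite bformS // bformC bformS // addrC. Qed.

Lemma bform0 N p : bform N.+1 0 p = bnum r p 0.
Proof.
rewrite /bform big_nat_recl //= big1 => [|k _]; last by rewrite !mul0r.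
by rewrite addr0 mul1r /weight big_geq ?mulr1.
Qed.

Lemma bform_add N m p : (m + p <= N)%N -> bform N.+1 m p = bnum r (m + p) 0.
Proof.
elim: m p => [|m IHm] p lempN; first by rewrite bform0.
by rewrite bform_shift; [rewrite IHm addnS // | lia | lia].
Qed.

Lemma bformE N m p : (minn m p < N)%N -> bform N m p = bnum r (m + p) 0.
Proof.
move=> lt_min_N; rewrite bform_trunc // -(@bform_trunc (m + p).+1); last by lia.
exact: bform_add.
Qed.

End WeightedForm.

Theorem lemma1 (R : comRingType) (r : nat -> R) (n l : nat) :
  \sum_(0 <= k < (minn n l).+1)
     bnum r (2 * n) (2 * k) * bnum r (2 * l) (2 * k) * \prod_(0 <= j < 2 * k) r j
  = bnum r (2 * n + 2 * l) 0.
Proof.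
rewrite -(@bformE _ r (2 * (minn n l).+1)); last by lia.
rewrite /bform sum_nat_mul2; apply: eq_bigr => k _.
have odd_2n1 m : odd (2 * m + (2 * k).+1) by rewrite addnS /= oddD !oddM.
by rewrite [bnum r (2 * n) (2 * k).+1]bnum_odd_eq0 // !mul0r addr0.
Qed.
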